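(* For finite asynchronous CCS, let $L_A$ be the set of labels of the transition system $A_I$ of the shape $-$ and $-\mid a.T_1$, for $a$ a channel name and $T_1$ a pure process. Then $L_A$-bisimilarity coincides with asynchronous bisimilarity: $\sim^{L_A}=\sim^A$.
   Context: Finite asynchronous CCS: names $a,b,\dots$; pure processes $P::=M\mid\bar a\mid(\nu a)P\mid P_1|P_2$ with summations $M::=\mathbf{0}\mid\tau.P\mid a.P\mid M_1+M_2$; extended processes also allow process variables $X$. Structural congruence $\equiv$: smallest congruence with $|$ commutative, associative, unit $\mathbf{0}$; $+$ commutative, associative, unit $\mathbf{0}$; $(\nu a)(\nu b)P\equiv(\nu b)(\nu a)P$; $(\nu a)(P|Q)\equiv P|(\nu a)Q$ if $a\notin fn(P)$; $\alpha$-conversion. Reduction $\rightsquigarrow$ (up to $\equiv$): $(a.P+M)|\bar a\rightsquigarrow P$, $\tau.P+M\rightsquigarrow P$, closed under $(\nu a)-$ and $-|R$. Ordinary LTS (up to $\equiv$), $\mu\in\{\tau,a,\bar a\}$: $a.P+M\xrightarrow{a}P$; $\tau.P+M\xrightarrow{\tau}P$; $\bar a\xrightarrow{\bar a}\mathbf{0}$; $P\xrightarrow{\mu}Q$ implies $(\nu a)P\xrightarrow{\mu}(\nu a)Q$ if $a\notin n(\mu)$ and $P|R\xrightarrow{\mu}Q|R$; $P\xrightarrow{a}P_1$, $Q\xrightarrow{\bar a}Q_1$ imply $P|Q\xrightarrow{\tau}P_1|Q_1$ (parallel composition commutative). Asynchronous bisimilarity $\sim^A$ is the largest symmetric relation $\mathcal{R}$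 such that if $P\,\mathcal{R}\,Q$: $P\xrightarrow{\tau}P'$ implies $Q\xrightarrow{\tau}Q'$ with $P'\,\mathcal{R}\,Q'$; $P\xrightarrow{\bar a}P'$ implies $Q\xrightarrow{\bar a}Q'$ with $P'\,\mathcal{R}\,Q'$; $P\xrightarrow{a}P'$ implies either $Q\xrightarrow{a}Q'$ with $P'\,\mathcal{R}\,Q'$ or $Q\xrightarrow{\tau}Q'$ with $P'\,\mathcal{R}\,Q'|\bar a$. The LTS $A$: (Tau) $P\rightsquigarrow Q$ gives $P\xrightarrow{-}Q$; (Rcv) $P\equiv(\nu A)(a.Q+M|R)$, $a\notin A$ gives $P\xrightarrow{-|\bar a}(\nu A)(Q|R)$; (Snd) $P\equiv(\nu A)(\bar a|Q)$, $a\notin A$ gives $P\xrightarrow{-|a.X_1}(\nu A)(Q|X_1)$. $A_I$ instantiates the process variable: $P\xrightarrow{C[-]}_{A_I}Q$ iff $P\xrightarrow{C_\epsilon[-]}Q_\epsilon$ in $A$ and a capture-avoiding substitution $\sigma$ of a pure process for $X_1$ has $Q_\epsilon\sigma\equiv Q$, $C_\epsilon[-]\sigma=C[-]$. For a set $L$ of labels, an $L$-bisimulation is a symmetric relation $\mathcal{R}$ such that if $P\,\mathcal{R}\,Q$ and $P\xrightarrow{C[-]}_{A_I}P'$ then: if $C[-]\in L$, $Q\xrightarrow{C[-]}_{A_I}Q'$ with $P'\,\mathcal{R}\,Q'$; otherwise $C[Q]\rightsquigarrow Q'$ with $P'\,\mathcal{R}\,Q'$. $\sim^L$ is the largest $L$-bisimulation.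 *)

From Stdlib Require Import List Arith Bool.
Import ListNotations.

Definition name := nat.

Inductive proc : Type :=
| PSum : summ -> proc
| POut : name -> proc
| PNu  : name -> proc -> proc
| PPar : proc -> proc -> proc
| PVar : nat -> proc
with summ : Type :=
| SZero : summ
| STau  : proc -> summ
| SIn   : name -> proc -> summ
| SPlus : summ -> summ -> summ.

Definition PZero : proc := PSum SZero.

Fixpoint pure (P : proc) : Prop :=
  match P with
  | PSum M => pureM M
  | POut _ => True
  | PNu _ P => pure P
  | PPar P Q => pure P /\ pure Q
  | PVar _ => False
  end
with pureM (M : summ) : Prop :=
  match M with
  | SZero => True
  | STau P => pure P
  | SIn _ P => pure P
  | SPlus M1 M2 => pureM M1 /\ pureM M2
  end.

Fixpoint fn (P : proc) : list name :=
  match P with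
  | PSum M => fnM M
  | POut a => [a]
  | PNu a P => filter (fun x => negb (Nat.eqb x a)) (fn P)
  | PPar P Q => fn P ++ fn Q
  | PVar _ => []
  end
with fnM (M : summ) : list name :=
  match M with
  | SZero => []
  | STau P => fn P
  | SIn a P => a :: fn P
  | SPlus M1 M2 => fnM M1 ++ fnM M2
  end.

Definition swapn (a b x : name) : name :=
  if Nat.eqb x a then b else if Nat.eqb x b then a else x.

Fixpoint swap (a b : name) (P : proc) : proc :=
  match P with
  | PSum M => PSum (swapM a b M)
  | POut x => POut (swapn a b x)
  | PNu x P => PNu (swapn a b x) (swap a b P)
  | PPar P Q => PPar (swap a b P) (swap a b Q)
  | PVar i => PVar i
  end
with swapM (a b : name) (M : summ) : summ :=
  match M with
  | SZero => SZero
  | STau P => STau (swap a b P)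
  | SIn x P => SIn (swapn a b x) (swap a b P)
  | SPlus M1 M2 => SPlus (swapM a b M1) (swapM a b M2)
  end.

Definition nus (A : list name) (P : proc) : proc := fold_right PNu P A.

Inductive scong : proc -> proc -> Prop :=
| sc_refl P : scong P P
| sc_sym P Q : scong P Q -> scong Q P
| sc_trans P Q R : scong P Q -> scong Q R -> scong P R
| sc_par_comm P Q : scong (PPar P Q) (PPar Q P)
| sc_par_assoc P Q R : scong (PPar (PPar P Q) R) (PPar P (PPar Q R))
| sc_par_unit P : scong (PPar P PZero) P
| sc_nu_comm a b P : scong (PNu a (PNu b P)) (PNu b (PNu a P))
| sc_scope a P Q : ~ In a (fn P) -> scong (PNu a (PPar P Q)) (PPar P (PNu a Q))
| sc_alpha a b P : ~ In b (fn (PNu a P)) -> scong (PNu a P) (PNu b (swap a b P))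
| sc_sum M M' : scongM M M' -> scong (PSum M) (PSum M')
| sc_nu a P P' : scong P P' -> scong (PNu a P) (PNu a P')
| sc_par P P' Q Q' : scong P P' -> scong Q Q' -> scong (PPar P Q) (PPar P' Q')
with scongM : summ -> summ -> Prop :=
| scM_refl M : scongM M M
| scM_sym M N : scongM M N -> scongM N M
| scM_trans M N K : scongM M N -> scongM N K -> scongM M K
| scM_plus_comm M N : scongM (SPlus M N) (SPlus N M)
| scM_plus_assoc M N K : scongM (SPlus (SPlus M N) K) (SPlus M (SPlus N K))
| scM_plus_unit M : scongM (SPlus M SZero) M
| scM_tau P P' : scong P P' -> scongM (STau P) (STau P')
| scM_in a P P' : scong P P' -> scongM (SIn a P) (SIn a P')
| scM_plus M M' N N' : scongM M M' -> scongM N N' -> scongM (SPlus M N) (SPlus M' N').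

Inductive red : proc -> proc -> Prop :=
| red_comm a P M : red (PPar (PSum (SPlus (SIn a P) M)) (POut a)) P
| red_tau P M : red (PSum (SPlus (STau P) M)) P
| red_nu a P Q : red P Q -> red (PNu a P) (PNu a Q)
| red_par P Q R : red P Q -> red (PPar P R) (PPar Q R)
| red_struct P P' Q' Q : scong P P' -> red P' Q' -> scong Q' Q -> red P Q.

Inductive act : Type := ATau | AIn (a : name) | AOut (a : name).

Definition act_names (mu : act) : list name :=
  match mu with ATau => [] | AIn a => [a] | AOut a => [a] end.

Inductive lts : proc -> act -> proc -> Prop :=
| lts_in a P M : lts (PSum (SPlus (SIn a P) M)) (AIn a) P
| lts_tau P M : lts (PSum (SPlus (STau P) M)) ATau P
| lts_out a : lts (POut a) (AOut a) PZero
| lts_nu a mu P Q : lts P mu Q -> ~ In a (act_names mu) -> lts (PNu a P) mu (PNu a Q)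
| lts_par mu P Q R : lts P mu Q -> lts (PPar P R) mu (PPar Q R)
| lts_comm a P P1 Q Q1 :
    lts P (AIn a) P1 -> lts Q (AOut a) Q1 -> lts (PPar P Q) ATau (PPar P1 Q1)
| lts_struct P P' mu Q' Q : scong P P' -> lts P' mu Q' -> scong Q' Q -> lts P mu Q.

Definition symmetric_rel (R : proc -> proc -> Prop) : Prop :=
  forall P Q, R P Q -> R Q P.

Definition async_bisim (R : proc -> proc -> Prop) : Prop :=
  symmetric_rel R /\
  forall P Q, R P Q ->
    (forall P', lts P ATau P' -> exists Q', lts Q ATau Q' /\ R P' Q') /\
    (forall a P', lts P (AOut a) P' -> exists Q', lts Q (AOut a) Q' /\ R P' Q') /\
    (forall a P', lts P (AIn a) P' ->
       (exists Q', lts Q (AIn a) Q' /\ R P' Q') \/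
       (exists Q', lts Q ATau Q' /\ R P' (PPar Q' (POut a)))).

Definition async_bisimilar (P Q : proc) : Prop :=
  exists R, async_bisim R /\ R P Q.

(** Labels (contexts) of the LTS A / A_I *)
Inductive ctx : Type :=
| CHole : ctx
| COut : name -> ctx
| CIn : name -> proc -> ctx.

Definition apply_ctx (C : ctx) (P : proc) : proc :=
  match C with
  | CHole => P
  | COut a => PPar P (POut a)
  | CIn a T => PPar P (PSum (SIn a T))
  end.

(** The LTS A, on extended processes; X_1 is PVar 1. *)
Inductive ltsA : proc -> ctx -> proc -> Prop :=
| ltsA_tau P Q : red P Q -> ltsA P CHole Q
| ltsA_rcv P A a Q M R :
    scong P (nus A (PPar (PSum (SPlus (SIn a Q) M)) R)) -> ~ In a A ->
    ltsA P (COut a) (nus A (PPar Q R))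
| ltsA_snd P A a Q :
    scong P (nus A (PPar (POut a) Q)) -> ~ In a A ->
    ltsA P (CIn a (PVar 1)) (nus A (PPar Q (PVar 1))).

Fixpoint occurs (x : nat) (P : proc) : bool :=
  match P with
  | PSum M => occursM x M
  | POut _ => false
  | PNu _ P => occurs x P
  | PPar P Q => occurs x P || occurs x Q
  | PVar i => Nat.eqb i x
  end
with occursM (x : nat) (M : summ) : bool :=
  match M with
  | SZero => false
  | STau P => occurs x P
  | SIn _ P => occurs x P
  | SPlus M1 M2 => occursM x M1 || occursM x M2
  end.

(** Capture-avoiding substitution of T for X_x: undefined (None) when a
    binder would capture a free name of T (alpha-conversion is available
    through structural congruence). *)
Fixpoint subst (T : proc) (x : nat) (P : proc) : option proc :=
  match P with
  | PSum M => option_map PSum (substM T x M)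
  | POut a => Some (POut a)
  | PNu a P0 =>
      if existsb (Nat.eqb a) (fn T) && occurs x P0 then None
      else option_map (PNu a) (subst T x P0)
  | PPar P1 P2 =>
      match subst T x P1, subst T x P2 with
      | Some P1', Some P2' => Some (PPar P1' P2')
      | _, _ => None
      end
  | PVar i => if Nat.eqb i x then Some T else Some (PVar i)
  end
with substM (T : proc) (x : nat) (M : summ) : option summ :=
  match M with
  | SZero => Some SZero
  | STau P => option_map STau (subst T x P)
  | SIn a P => option_map (SIn a) (subst T x P)
  | SPlus M1 M2 =>
      match substM T x M1, substM T x M2 with
      | Some M1', Some M2' => Some (SPlus M1' M2')
      | _, _ => None
      end
  end.

Definition subst_ctx (T : proc) (x : nat) (C : ctx) : option ctx :=
  match C with
  | CHole => Some CHole
  | COut a => Some (COut a)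
  | CIn a U => option_map (CIn a) (subst T x U)
  end.

Definition ltsAI (P : proc) (C : ctx) (Q : proc) : Prop :=
  exists Ce Qe T Qs,
    ltsA P Ce Qe /\ pure T /\
    subst T 1 Qe = Some Qs /\ scong Qs Q /\
    subst_ctx T 1 Ce = Some C.

Definition L_bisim (L : ctx -> Prop) (R : proc -> proc -> Prop) : Prop :=
  symmetric_rel R /\
  forall P Q C P', R P Q -> ltsAI P C P' ->
    (L C -> exists Q', ltsAI Q C Q' /\ R P' Q') /\
    (~ L C -> exists Q', red (apply_ctx C Q) Q' /\ R P' Q').

Definition L_bisimilar (L : ctx -> Prop) (P Q : proc) : Prop :=
  exists R, L_bisim L R /\ R P Q.

Definition LA (C : ctx) : Prop :=
  C = CHole \/ exists a T, pure T /\ C = CIn a T.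

From Stdlib Require Import List Arith Bool Lia.
Import ListNotations.

(* On pure processes the transitions of [A_I] are characterised by the
   ordinary LTS: [-] steps are reductions (= tau transitions), [- | a] steps
   are inputs on [a], and [- | a.T] steps are outputs on [a] followed by
   composition with [T].  These correspondences go through a syntax-directed
   LTS which agrees with [lts] up to structural congruence.  Asynchronous
   bisimilarity is then an [L_A]-bisimulation, the [- | a.T] clause needing
   that it is preserved by parallel composition.  Conversely, [L_A]-bisimilarity
   is an asynchronous bisimulation: outputs are tested by the context
   [- | a.0], and since [- | a] is not in [L_A], an input of [P] is answered by
   a reduction of [Q | a], which either consumes the message (an input of [Q])
   or leaves it in place (a tau step of [Q]) -- exactly the asynchronous input
   clause. *)

Scheme proc_ind2 := Induction for proc Sort Prop
with summ_ind2 := Induction for summ Sort Prop.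
Combined Scheme proc_summ_ind from proc_ind2, summ_ind2.

Scheme scong_ind2 := Induction for scong Sort Prop
with scongM_ind2 := Induction for scongM Sort Prop.
Combined Scheme scong_scongM_ind from scong_ind2, scongM_ind2.

Ltac case_swapn := unfold swapn in *; repeat match goal with
 | |- context[Nat.eqb ?u ?v] => destruct (Nat.eqb_spec u v)
 | H: context[Nat.eqb ?u ?v] |- _ => destruct (Nat.eqb_spec u v)
 end; subst; try lia; try congruence.

Lemma swapn_involutive a b x : swapn a b (swapn a b x) = x.
Proof. case_swapn. Qed.

Lemma swapn_inj a b x y : swapn a b x = swapn a b y -> x = y.
Proof.
  intro H. rewrite <- (swapn_involutive a b x), <- (swapn_involutive a b y), H.
  reflexivity.
Qed.

Lemma swapn_id a b x : x <> a -> x <> b -> swapn a b x = x.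
Proof. intros; case_swapn. Qed.

Lemma swapn_eqb a b x y : Nat.eqb (swapn a b x) (swapn a b y) = Nat.eqb x y.
Proof.
  destruct (Nat.eqb_spec x y) as [->|Hxy]; [apply Nat.eqb_refl|].
  apply Nat.eqb_neq. intro H; apply swapn_inj in H; auto.
Qed.

Lemma swap_involutive a b :
  (forall P, swap a b (swap a b P) = P) /\ (forall M, swapM a b (swapM a b M) = M).
Proof. apply proc_summ_ind; intros; simpl; rewrite ?swapn_involutive; congruence. Qed.

Lemma in_filter_neq x a l :
  In x (filter (fun y => negb (Nat.eqb y a)) l) <-> In x l /\ x <> a.
Proof. rewrite filter_In. destruct (Nat.eqb_spec x a); simpl; intuition congruence. Qed.

Lemma filter_neq_map_swapn a b n l :
  filter (fun x => negb (Nat.eqb x (swapn a b n))) (map (swapn a b) l) =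
  map (swapn a b) (filter (fun x => negb (Nat.eqb x n)) l).
Proof.
  induction l as [|x l IH]; simpl; auto.
  rewrite swapn_eqb. destruct (Nat.eqb x n); simpl; rewrite IH; reflexivity.
Qed.

Lemma fn_swap a b :
  (forall P, fn (swap a b P) = map (swapn a b) (fn P)) /\
  (forall M, fnM (swapM a b M) = map (swapn a b) (fnM M)).
Proof.
  apply proc_summ_ind; intros; simpl; rewrite ?map_app; try congruence.
  rewrite H. apply filter_neq_map_swapn.
Qed.

Lemma pure_swap a b :
  (forall P, pure (swap a b P) <-> pure P) /\ (forall M, pureM (swapM a b M) <-> pureM M).
Proof. apply proc_summ_ind; intros; simpl; tauto. Qed.

Definition fresh (l : list name) : name := S (list_max l).

Lemma fresh_notin l : ~ In (fresh l) l.
Proof.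
  intro H. pose proof (proj1 (list_max_le l _) (Nat.le_refl _)) as Hmax.
  rewrite Forall_forall in Hmax. specialize (Hmax _ H). unfold fresh in Hmax. lia.
Qed.

Lemma in_fn_alpha a b P x :
  ~ In b (fn (PNu a P)) -> In x (fn (PNu a P)) <-> In x (fn (PNu b (swap a b P))).
Proof.
  simpl. rewrite !in_filter_neq, (proj1 (fn_swap a b)), in_map_iff. intro Hb. split.
  - intros [Hx Hxa]. assert (Hxb : x <> b) by (intros ->; tauto).
    split; auto. exists x; split; auto. apply swapn_id; auto.
  - intros [[y [<- Hy]] Hyb]. destruct (Nat.eqb_spec y a) as [->|Hya].
    + case_swapn.
    + destruct (Nat.eqb_spec y b) as [->|Hyb']; [tauto|].
      rewrite swapn_id; auto.
Qed.

Lemma fn_scong :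
  (forall P Q, scong P Q -> forall x, In x (fn P) <-> In x (fn Q)) /\
  (forall M N, scongM M N -> forall x, In x (fnM M) <-> In x (fnM N)).
Proof.
  apply scong_scongM_ind; intros; try (apply in_fn_alpha; assumption); simpl in *;
    repeat rewrite ?in_app_iff, ?in_filter_neq in *; try tauto.
  all: repeat match goal with H : forall x, _ <-> _ |- _ => specialize (H x) end;
    simpl in *; intuition (subst; auto; tauto).
Qed.

Lemma pure_scong :
  (forall P Q, scong P Q -> (pure P <-> pure Q)) /\
  (forall M N, scongM M N -> (pureM M <-> pureM N)).
Proof.
  apply scong_scongM_ind; intros; simpl in *; try tauto.
  rewrite (proj1 (pure_swap a b)). tauto.
Qed.

Lemma sc_par_right_comm P Q R : scong (PPar (PPar P Q) R) (PPar (PPar P R) Q).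
Proof.
  eapply sc_trans; [apply sc_par_assoc|].
  eapply sc_trans; [apply sc_par; [apply sc_refl | apply sc_par_comm]|].
  apply sc_sym, sc_par_assoc.
Qed.

Lemma sc_par_assoc_comm P Q R : scong (PPar P (PPar Q R)) (PPar (PPar P R) Q).
Proof. eapply sc_trans; [apply sc_sym, sc_par_assoc | apply sc_par_right_comm]. Qed.

Lemma sc_par_r P Q Q' : scong Q Q' -> scong (PPar P Q) (PPar P Q').
Proof. intro; apply sc_par; auto using sc_refl. Qed.

Lemma sc_par_l P P' Q : scong P P' -> scong (PPar P Q) (PPar P' Q).
Proof. intro; apply sc_par; auto using sc_refl. Qed.

Lemma pure_nus A P : pure (nus A P) <-> pure P.
Proof. induction A; simpl; tauto. Qed.

Lemma scong_nus A P Q : scong P Q -> scong (nus A P) (nus A Q).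
Proof. induction A; simpl; auto using sc_nu. Qed.

Lemma nus_par_scope A P R :
  (forall x, In x A -> ~ In x (fn R)) -> scong (PPar (nus A P) R) (nus A (PPar P R)).
Proof.
  induction A as [|a A IH]; simpl; intros HA; [apply sc_refl|].
  eapply sc_trans; [apply sc_par_comm|].
  eapply sc_trans; [apply sc_sym, sc_scope; auto|].
  apply sc_nu. eapply sc_trans; [apply sc_par_comm | auto].
Qed.

Lemma swap_nus a b A P :
  (forall x, In x A -> x <> a /\ x <> b) -> swap a b (nus A P) = nus A (swap a b P).
Proof.
  induction A as [|c A IH]; simpl; intros H; auto.
  destruct (H c (or_introl eq_refl)). rewrite swapn_id, IH; auto.
Qed.

(** * A syntax-directed LTS *)

(* [lts] is closed under [scong] by its last rule and so cannot be inverted;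
   [st] is its syntax-directed core, and the two agree up to [scong]. *)
Inductive st : proc -> act -> proc -> Prop :=
| st_sum M mu P : stM M mu P -> st (PSum M) mu P
| st_out a : st (POut a) (AOut a) PZero
| st_nu a mu P Q : st P mu Q -> ~ In a (act_names mu) -> st (PNu a P) mu (PNu a Q)
| st_parl mu P P' Q : st P mu P' -> st (PPar P Q) mu (PPar P' Q)
| st_parr mu P Q Q' : st Q mu Q' -> st (PPar P Q) mu (PPar P Q')
| st_comml a P P' Q Q' :
    st P (AIn a) P' -> st Q (AOut a) Q' -> st (PPar P Q) ATau (PPar P' Q')
| st_commr a P P' Q Q' :
    st P (AOut a) P' -> st Q (AIn a) Q' -> st (PPar P Q) ATau (PPar P' Q')
with stM : summ -> act -> proc -> Prop :=
| stM_tau P : stM (STau P) ATau P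
| stM_in a P : stM (SIn a P) (AIn a) P
| stM_l M N mu P : stM M mu P -> stM (SPlus M N) mu P
| stM_r M N mu P : stM N mu P -> stM (SPlus M N) mu P.

Scheme st_ind2 := Induction for st Sort Prop
with stM_ind2 := Induction for stM Sort Prop.
Combined Scheme st_stM_ind from st_ind2, stM_ind2.

#[local] Hint Constructors st stM : st_db.

Ltac inv_st := unfold PZero in *; repeat match goal with
 | H : st (PPar _ _) _ _ |- _ => inversion H; subst; clear H
 | H : st (PNu _ _) _ _ |- _ => inversion H; subst; clear H
 | H : st (PSum _) _ _ |- _ => inversion H; subst; clear H
 | H : st (POut _) _ _ |- _ => inversion H; subst; clear H
 | H : stM (SPlus _ _) _ _ |- _ => inversion H; subst; clear H
 | H : stM SZero _ _ |- _ => inversion H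
 | H : stM (STau _) _ _ |- _ => inversion H; subst; clear H
 | H : stM (SIn _ _) _ _ |- _ => inversion H; subst; clear H
 end.

Lemma st_fn :
  (forall P mu P', st P mu P' ->
     (forall x, In x (act_names mu) -> In x (fn P)) /\
     (forall x, In x (fn P') -> In x (fn P))) /\
  (forall M mu P', stM M mu P' ->
     (forall x, In x (act_names mu) -> In x (fnM M)) /\
     (forall x, In x (fn P') -> In x (fnM M))).
Proof.
  apply st_stM_ind; intros; simpl in *; repeat rewrite ?in_app_iff, ?in_filter_neq in *;
   try (split; intros; intuition (subst; auto); fail).
  all: repeat match goal with H : _ /\ _ |- _ => destruct H end.
  all: split; intros y Hy; repeat rewrite ?in_app_iff, ?in_filter_neq in *; simpl in *.
  all: try (split; [|intro; subst]; eauto; fail).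
  all: try (destruct Hy as [Hy Hy']; split; eauto; fail).
  all: repeat match goal with
         H : forall x, In x [?a] -> _ |- _ => specialize (H a (or_introl eq_refl)) end.
  all: try tauto; intuition (subst; eauto).
Qed.

Lemma st_act_names_fn P mu P' x : st P mu P' -> In x (act_names mu) -> In x (fn P).
Proof. intros H; apply (proj1 st_fn _ _ _ H). Qed.

Lemma st_fn_target P mu P' x : st P mu P' -> In x (fn P') -> In x (fn P).
Proof. intros H; apply (proj1 st_fn _ _ _ H). Qed.

Definition swap_act a b mu :=
  match mu with
  | ATau => ATau
  | AIn x => AIn (swapn a b x)
  | AOut x => AOut (swapn a b x)
  end.

Lemma swap_act_id a b mu :
  (forall x, In x (act_names mu) -> x <> a /\ x <> b) -> swap_act a b mu = mu.
Proof.
  destruct mu as [|x|x]; simpl; intros H; auto;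
    destruct (H x); auto; rewrite swapn_id; auto.
Qed.

Lemma st_swap a b :
  (forall P mu P', st P mu P' -> st (swap a b P) (swap_act a b mu) (swap a b P')) /\
  (forall M mu P', stM M mu P' -> stM (swapM a b M) (swap_act a b mu) (swap a b P')).
Proof.
  apply st_stM_ind; intros; simpl in *; try (econstructor; eauto; fail).
  constructor; auto. destruct mu; simpl in *; auto;
    intros [E|E]; auto; apply swapn_inj in E; auto.
Qed.

Definition st_sim P Q :=
  forall mu P', st P mu P' -> exists Q', st Q mu Q' /\ scong P' Q'.
Definition stM_sim M N :=
  forall mu P', stM M mu P' -> exists Q', stM N mu Q' /\ scong P' Q'.

Lemma st_sim_refl P : st_sim P P.
Proof. intros mu P' H; eauto using sc_refl. Qed.

Lemma stM_sim_refl M : stM_sim M M.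
Proof. intros mu P' H; eauto using sc_refl. Qed.

Lemma st_sim_trans P Q R : st_sim P Q -> st_sim Q R -> st_sim P R.
Proof.
  intros H1 H2 mu P' H. destruct (H1 _ _ H) as [Q' [H3 H4]].
  destruct (H2 _ _ H3) as [R' [H5 H6]]. eauto using sc_trans.
Qed.

Lemma stM_sim_trans M N K : stM_sim M N -> stM_sim N K -> stM_sim M K.
Proof.
  intros H1 H2 mu P' H. destruct (H1 _ _ H) as [Q' [H3 H4]].
  destruct (H2 _ _ H3) as [R' [H5 H6]]. eauto using sc_trans.
Qed.

Lemma st_sim_par_comm P Q : st_sim (PPar P Q) (PPar Q P).
Proof. intros mu X H; inv_st; eexists; split; eauto with st_db; apply sc_par_comm. Qed.

Lemma st_sim_par_assoc P Q R : st_sim (PPar (PPar P Q) R) (PPar P (PPar Q R)).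
Proof. intros mu X H; inv_st; eexists; split; eauto 7 with st_db; apply sc_par_assoc. Qed.

Lemma st_sim_par_assoc_sym P Q R : st_sim (PPar P (PPar Q R)) (PPar (PPar P Q) R).
Proof.
  intros mu X H; inv_st; eexists; split; eauto 7 with st_db; apply sc_sym, sc_par_assoc.
Qed.

Lemma st_sim_par_unit P : st_sim (PPar P PZero) P.
Proof. intros mu X H; inv_st; eexists; split; eauto with st_db; apply sc_par_unit. Qed.

Lemma st_sim_par_unit_sym P : st_sim P (PPar P PZero).
Proof. intros mu X H; eexists; split; eauto with st_db; apply sc_sym, sc_par_unit. Qed.

Lemma st_sim_nu_comm a b P : st_sim (PNu a (PNu b P)) (PNu b (PNu a P)).
Proof. intros mu X H; inv_st; eexists; split; eauto with st_db; apply sc_nu_comm. Qed.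

Lemma st_sim_scope a P Q : ~ In a (fn P) -> st_sim (PNu a (PPar P Q)) (PPar P (PNu a Q)).
Proof.
  intros Ha mu X H; inv_st.
  - eexists; split; [eauto with st_db|]. apply sc_scope. intro; eauto using st_fn_target.
  - eexists; split; [eauto with st_db|]. apply sc_scope; auto.
  - eexists; split. eapply st_comml; eauto. econstructor; [eassumption|].
    simpl; intros [E|E]; auto; subst. eauto using st_act_names_fn, in_eq.
    apply sc_scope. intro; eauto using st_fn_target.
  - eexists; split. eapply st_commr; eauto. econstructor; [eassumption|].
    simpl; intros [E|E]; auto; subst. eauto using st_act_names_fn, in_eq.
    apply sc_scope. intro; eauto using st_fn_target.
Qed.

Lemma st_sim_scope_sym a P Q :
  ~ In a (fn P) -> st_sim (PPar P (PNu a Q)) (PNu a (PPar P Q)).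
Proof.
  intros Ha mu X H; inv_st.
  - eexists; split. constructor. eauto with st_db. intro; eauto using st_act_names_fn.
    apply sc_sym, sc_scope. intro; eauto using st_fn_target.
  - eexists; split. constructor. eauto with st_db. auto.
    apply sc_sym, sc_scope; auto.
  - eexists; split. constructor. eauto with st_db. simpl; tauto.
    apply sc_sym, sc_scope. intro; eauto using st_fn_target.
  - eexists; split. constructor. eauto with st_db. simpl; tauto.
    apply sc_sym, sc_scope. intro; eauto using st_fn_target.
Qed.

Lemma st_sim_alpha a b P : ~ In b (fn (PNu a P)) -> st_sim (PNu a P) (PNu b (swap a b P)).
Proof.
  intros Hb mu X H; inv_st. simpl in Hb. rewrite in_filter_neq in Hb.
  match goal with Hs : st P mu ?Y |- _ => rename Hs into Hst end.
  assert (Hm : swap_act a b mu = mu).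
  { apply swap_act_id. intros x Hx. split; intros ->; [tauto|].
    apply Hb. split; [eauto using st_act_names_fn | intros ->; tauto]. }
  exists (PNu b (swap a b Q)); split.
  - constructor.
    + pose proof (proj1 (st_swap a b) _ _ _ Hst) as Hs. rewrite Hm in Hs. exact Hs.
    + intro Hx. apply Hb. split; [eauto using st_act_names_fn | intros ->; tauto].
  - apply sc_alpha. simpl. rewrite in_filter_neq. intros [H1 H2].
    apply Hb. split; eauto using st_fn_target.
Qed.

Lemma st_sim_alpha_sym a b P :
  ~ In b (fn (PNu a P)) -> st_sim (PNu b (swap a b P)) (PNu a P).
Proof.
  intros Hb mu X H; inv_st. simpl in Hb. rewrite in_filter_neq in Hb.
  match goal with Hs : st (swap a b P) mu ?Z |- _ => rename Hs into Hst; rename Z into Y end.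
  assert (Hn : forall x, In x (act_names mu) -> x <> a /\ x <> b).
  { intros x Hx. pose proof (st_act_names_fn _ _ _ _ Hst Hx) as Hf.
    rewrite (proj1 (fn_swap a b)), in_map_iff in Hf. destruct Hf as [y [<- Hy]].
    destruct (Nat.eqb_spec y a) as [->|Hya].
    - unfold swapn in Hx |- *; rewrite Nat.eqb_refl in *. tauto.
    - destruct (Nat.eqb_spec y b) as [->|Hyb]; [tauto|]. rewrite swapn_id; auto. }
  assert (Hm : swap_act a b mu = mu) by (apply swap_act_id; auto).
  pose proof (proj1 (st_swap a b) _ _ _ Hst) as Hs.
  rewrite (proj1 (swap_involutive a b)), Hm in Hs.
  eexists; split.
  - constructor; eauto. intro Hx; destruct (Hn _ Hx); auto.
  - apply sc_sym. pattern Y at 2. rewrite <- (proj1 (swap_involutive a b) Y).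
    apply sc_alpha. simpl. rewrite in_filter_neq. intros [H1 H2].
    rewrite (proj1 (fn_swap a b)), in_map_iff in H1. destruct H1 as [z [E Hz]].
    pose proof (st_fn_target _ _ _ _ Hst Hz) as Hz'.
    rewrite (proj1 (fn_swap a b)), in_map_iff in Hz'. destruct Hz' as [w [<- Hw]].
    rewrite swapn_involutive in E. subst. apply Hb. split; auto.
Qed.

Lemma st_sim_nu a P Q : st_sim P Q -> st_sim (PNu a P) (PNu a Q).
Proof.
  intros HS mu X H; inv_st.
  match goal with Hs : st P mu _ |- _ => destruct (HS _ _ Hs) as [Q' [? ?]] end.
  exists (PNu a Q'); split; eauto with st_db. apply sc_nu; auto.
Qed.

Lemma st_sim_par P P' Q Q' :
  scong P P' -> scong Q Q' -> st_sim P P' -> st_sim Q Q' -> st_sim (PPar P Q) (PPar P' Q').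
Proof.
  intros E1 E2 H1 H2 mu X H; inv_st;
  repeat match goal with
  | H : st P _ _ |- _ => destruct (H1 _ _ H) as [? [? ?]]; clear H
  | H : st Q _ _ |- _ => destruct (H2 _ _ H) as [? [? ?]]; clear H
  end; eexists; split; eauto with st_db; apply sc_par; auto using sc_refl.
Qed.

Lemma st_sim_sum M N : stM_sim M N -> st_sim (PSum M) (PSum N).
Proof.
  intros HS mu X H; inv_st.
  match goal with Hs : stM M mu _ |- _ => destruct (HS _ _ Hs) as [Q' [? ?]] end.
  eauto with st_db.
Qed.

Lemma stM_sim_plus_comm M N : stM_sim (SPlus M N) (SPlus N M).
Proof. intros mu X H; inv_st; eexists; split; eauto with st_db; apply sc_refl. Qed.

Lemma stM_sim_plus_assoc M N K : stM_sim (SPlus (SPlus M N) K) (SPlus M (SPlus N K)).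
Proof. intros mu X H; inv_st; eexists; split; eauto with st_db; apply sc_refl. Qed.

Lemma stM_sim_plus_assoc_sym M N K : stM_sim (SPlus M (SPlus N K)) (SPlus (SPlus M N) K).
Proof. intros mu X H; inv_st; eexists; split; eauto with st_db; apply sc_refl. Qed.

Lemma stM_sim_plus_unit M : stM_sim (SPlus M SZero) M.
Proof. intros mu X H; inv_st; eexists; split; eauto with st_db; apply sc_refl. Qed.

Lemma stM_sim_plus_unit_sym M : stM_sim M (SPlus M SZero).
Proof. intros mu X H; eexists; split; eauto with st_db; apply sc_refl. Qed.

Lemma stM_sim_tau P P' : scong P P' -> stM_sim (STau P) (STau P').
Proof. intros HS mu X H; inv_st; eexists; split; eauto with st_db. Qed.

Lemma stM_sim_in a P P' : scong P P' -> stM_sim (SIn a P) (SIn a P').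
Proof. intros HS mu X H; inv_st; eexists; split; eauto with st_db. Qed.

Lemma stM_sim_plus M M' N N' : stM_sim M M' -> stM_sim N N' -> stM_sim (SPlus M N) (SPlus M' N').
Proof.
  intros H1 H2 mu X H; inv_st.
  - match goal with Hs : stM M mu _ |- _ => destruct (H1 _ _ Hs) as [? [? ?]] end.
    eauto with st_db.
  - match goal with Hs : stM N mu _ |- _ => destruct (H2 _ _ Hs) as [? [? ?]] end.
    eauto with st_db.
Qed.

Lemma scong_st_sim :
  (forall P Q, scong P Q -> st_sim P Q /\ st_sim Q P) /\
  (forall M N, scongM M N -> stM_sim M N /\ stM_sim N M).
Proof.
  apply scong_scongM_ind; intros; try (destruct H); try (destruct H0);
  eauto 6 using st_sim_refl, stM_sim_refl, st_sim_trans, stM_sim_trans, st_sim_par_comm,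
    st_sim_par_assoc, st_sim_par_assoc_sym, st_sim_par_unit, st_sim_par_unit_sym,
    st_sim_nu_comm, st_sim_scope, st_sim_scope_sym, st_sim_alpha, st_sim_alpha_sym,
    st_sim_nu, st_sim_par, st_sim_sum, stM_sim_plus_comm, stM_sim_plus_assoc,
    stM_sim_plus_assoc_sym, stM_sim_plus_unit, stM_sim_plus_unit_sym, stM_sim_tau,
    stM_sim_in, stM_sim_plus, sc_sym.
Qed.

Lemma stM_prefix M mu P : stM M mu P -> exists pre M', scongM M (SPlus pre M') /\
  ((pre = STau P /\ mu = ATau) \/ (exists a, pre = SIn a P /\ mu = AIn a)).
Proof.
  induction 1 as [P|a P|M N mu P _ [pre [M' [H1 H2]]]|M N mu P _ [pre [M' [H1 H2]]]].
  - exists (STau P), SZero. split; auto. apply scM_sym, scM_plus_unit.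
  - exists (SIn a P), SZero. split; eauto. apply scM_sym, scM_plus_unit.
  - exists pre, (SPlus M' N). split; auto.
    eapply scM_trans; [apply scM_plus; [apply H1 | apply scM_refl] | apply scM_plus_assoc].
  - exists pre, (SPlus M' M). split; auto.
    eapply scM_trans; [apply scM_plus_comm|].
    eapply scM_trans; [apply scM_plus; [apply H1 | apply scM_refl] | apply scM_plus_assoc].
Qed.

Lemma st_lts P mu P' : st P mu P' -> lts P mu P'.
Proof.
  induction 1.
  - destruct (stM_prefix _ _ _ H) as [pre [M' [H1 [[-> ->]|[a [-> ->]]]]]];
      (eapply lts_struct; [apply sc_sum, H1 | constructor | apply sc_refl]).
  - apply lts_out.
  - apply lts_nu; auto.
  - apply lts_par; auto.
  - eapply lts_struct; [apply sc_par_comm | apply lts_par; eauto | apply sc_par_comm].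
  - eapply lts_comm; eauto.
  - eapply lts_struct; [apply sc_par_comm | eapply lts_comm; eauto | apply sc_par_comm].
Qed.

Lemma lts_st P mu P' : lts P mu P' -> exists P'', st P mu P'' /\ scong P'' P'.
Proof.
  induction 1 as [| | | a mu P Q _ [X [H1 H2]] Ha | mu P Q R _ [X [H1 H2]]
                  | a P P1 Q Q1 _ [X [H1 H2]] _ [Y [H3 H4]] | P P' mu Q' Q HP _ [X [H2 H3]] HQ].
  1-3: eexists; split; [eauto with st_db | apply sc_refl].
  - exists (PNu a X); split; eauto with st_db. apply sc_nu; auto.
  - exists (PPar X R); split; eauto with st_db. apply sc_par_l; auto.
  - exists (PPar X Y); split; eauto with st_db. apply sc_par; auto.
  - destruct (proj2 (proj1 scong_st_sim _ _ HP) _ _ H2) as [Y [H4 H5]].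
    exists Y; split; auto.
    eapply sc_trans; [apply sc_sym, H5 | eapply sc_trans; [apply H3 | apply HQ]].
Qed.

Lemma red_lts_tau P Q : red P Q -> lts P ATau Q.
Proof.
  induction 1.
  - eapply lts_struct; [apply sc_refl | | apply sc_par_unit].
    eapply lts_comm; [apply lts_in | apply lts_out].
  - apply lts_tau.
  - apply lts_nu; simpl; auto.
  - apply lts_par; auto.
  - eapply lts_struct; eauto.
Qed.

Lemma stM_no_out M mu P : stM M mu P -> forall a, mu <> AOut a.
Proof. induction 1; congruence || auto. Qed.

Lemma st_out_scong Q a Q' : st Q (AOut a) Q' -> scong Q (PPar Q' (POut a)).
Proof.
  remember (AOut a) as mu eqn:E. induction 1; subst; try discriminate.
  - exfalso; eapply stM_no_out; eauto.
  - injection E as ->. eapply sc_trans; [apply sc_sym, sc_par_unit | apply sc_par_comm].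
  - simpl in H0. eapply sc_trans; [apply sc_nu, IHst; reflexivity|].
    eapply sc_trans; [apply sc_nu, sc_par_comm|].
    eapply sc_trans; [apply sc_scope; simpl; intuition | apply sc_par_comm].
  - eapply sc_trans; [apply sc_par_l, IHst; reflexivity | apply sc_par_right_comm].
  - eapply sc_trans; [apply sc_par_r, IHst; reflexivity | apply sc_sym, sc_par_assoc].
Qed.

Lemma st_in_red P a P' : st P (AIn a) P' -> red (PPar P (POut a)) P'.
Proof.
  remember (AIn a) as mu eqn:E. induction 1; subst; try discriminate.
  - destruct (stM_prefix _ _ _ H) as [pre [M' [H1 [[-> E']|[b [-> E']]]]]];
      try discriminate.
    injection E' as ->.
    eapply red_struct; [apply sc_par_l, sc_sum, H1 | apply red_comm | apply sc_refl].
  - simpl in H0. eapply red_struct; [| apply red_nu, IHst; reflexivity | apply sc_refl].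
    eapply sc_trans; [apply sc_par_comm|].
    eapply sc_trans; [apply sc_sym, sc_scope; simpl; intuition | apply sc_nu, sc_par_comm].
  - eapply red_struct; [apply sc_par_right_comm | apply red_par, IHst; reflexivity
                       | apply sc_refl].
  - eapply red_struct; [| apply red_par, IHst; reflexivity | apply sc_par_comm].
    eapply sc_trans; [apply sc_par_assoc | apply sc_par_comm].
Qed.

Lemma st_tau_red P P' : st P ATau P' -> red P P'.
Proof.
  remember ATau as mu eqn:E. induction 1; subst; try discriminate.
  - destruct (stM_prefix _ _ _ H) as [pre [M' [H1 [[-> _]|[a [-> E']]]]]];
      try discriminate.
    eapply red_struct; [apply sc_sum, H1 | apply red_tau | apply sc_refl].
  - apply red_nu; auto.
  - apply red_par; auto.
  - eapply red_struct; [apply sc_par_comm | apply red_par; auto | apply sc_par_comm].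
  - apply red_struct with (PPar (PPar P (POut a)) Q') (PPar P' Q').
    + eapply sc_trans; [apply sc_par_r, st_out_scong; eauto | apply sc_par_assoc_comm].
    + apply red_par, st_in_red; auto.
    + apply sc_refl.
  - apply red_struct with (PPar (PPar Q (POut a)) P') (PPar Q' P').
    + eapply sc_trans; [apply sc_par_comm|].
      eapply sc_trans; [apply sc_par_r, st_out_scong; eauto | apply sc_par_assoc_comm].
    + apply red_par, st_in_red; auto.
    + apply sc_par_comm.
Qed.

Lemma lts_tau_red P Q : lts P ATau Q -> red P Q.
Proof.
  intros H. destruct (lts_st _ _ _ H) as [X [H1 H2]].
  eapply red_struct; [apply sc_refl | apply st_tau_red; eauto | auto].
Qed.

Lemma lts_out_scong Q a Q' : lts Q (AOut a) Q' -> scong Q (PPar Q' (POut a)).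
Proof.
  intros H. destruct (lts_st _ _ _ H) as [X [H1 H2]].
  eapply sc_trans; [apply st_out_scong; eauto | apply sc_par_l; auto].
Qed.

Lemma lts_in_red P a P' : lts P (AIn a) P' -> red (PPar P (POut a)) P'.
Proof.
  intros H. destruct (lts_st _ _ _ H) as [X [H1 H2]].
  eapply red_struct; [apply sc_refl | apply st_in_red; eauto | auto].
Qed.

Lemma lts_pure P mu Q : lts P mu Q -> pure P -> pure Q.
Proof.
  induction 1; simpl; intros; try tauto.
  apply (proj1 pure_scong _ _ H1), IHlts, (proj1 pure_scong _ _ H); auto.
Qed.

Lemma red_pure P Q : red P Q -> pure P -> pure Q.
Proof. intros H; apply lts_pure with ATau; apply red_lts_tau; auto. Qed.

Lemma lts_nus A P mu Q :
  lts P mu Q -> (forall x, In x A -> ~ In x (act_names mu)) -> lts (nus A P) mu (nus A Q).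
Proof. induction A; simpl; intros; auto. apply lts_nu; auto. Qed.

Lemma red_par_out_inv P a P' : red (PPar P (POut a)) P' ->
  (exists P1, lts P ATau P1 /\ scong P' (PPar P1 (POut a))) \/
  (exists P1, lts P (AIn a) P1 /\ scong P' P1).
Proof.
  intros H. destruct (lts_st _ _ _ (red_lts_tau _ _ H)) as [Z [HZ HZP]].
  inversion HZ; subst; clear HZ; inv_st.
  - left. eexists; split; [apply st_lts; eauto | apply sc_sym; auto].
  - right. eexists; split; [apply st_lts; eauto|].
    eapply sc_trans; [apply sc_sym, HZP | apply sc_par_unit].
Qed.

(** * The transition system [A_I] on pure processes *)

Lemma occurs_pure x :
  (forall P, pure P -> occurs x P = false) /\ (forall M, pureM M -> occursM x M = false).
Proof.
  apply proc_summ_ind; simpl; intros; try tauto; auto;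
    repeat match goal with H : _ /\ _ |- _ => destruct H end;
    try (rewrite H, H0; auto).
Qed.

Lemma subst_pure T x :
  (forall P, pure P -> subst T x P = Some P) /\ (forall M, pureM M -> substM T x M = Some M).
Proof.
  apply proc_summ_ind; simpl; intros; try tauto;
    repeat match goal with H : _ /\ _ |- _ => destruct H end.
  all: rewrite ?(proj1 (occurs_pure x)), ?andb_false_r; auto.
  all: rewrite ?H, ?H0; auto.
Qed.

Lemma occurs_nus_par_var A P : occurs 1 (nus A (PPar P (PVar 1))) = true.
Proof. induction A; simpl; auto. rewrite orb_true_r; auto. Qed.

(* [subst] is undefined when a binder would capture a free name of [T], so a
   successful substitution under [nus A] certifies that [A] avoids [fn T]. *)
Lemma subst_nus_par_var A P T Ps : pure P -> subst T 1 (nus A (PPar P (PVar 1))) = Some Ps ->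
  Ps = nus A (PPar P T) /\ forall x, In x A -> ~ In x (fn T).
Proof.
  revert Ps; induction A as [|a A IH]; simpl; intros Ps HP H.
  - rewrite (proj1 (subst_pure T 1)) in H; auto. injection H; auto.
  - rewrite occurs_nus_par_var, andb_true_r in H.
    destruct (existsb (Nat.eqb a) (fn T)) eqn:E; try discriminate.
    destruct (subst T 1 (nus A (PPar P (PVar 1)))) as [Ps'|]; simpl in H; try discriminate.
    injection H as <-. destruct (IH Ps' HP eq_refl) as [-> HA]. split; auto.
    intros x [->|Hx]; auto. intro Hin.
    assert (existsb (Nat.eqb x) (fn T) = true)
      by (apply existsb_exists; exists x; split; auto; apply Nat.eqb_refl).
    congruence.
Qed.

Lemma ltsAI_scong P P' C Q : scong P P' -> ltsAI P' C Q -> ltsAI P C Q.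
Proof.
  intros HS [Ce [Qe [T [Qs [H1 H]]]]]. exists Ce, Qe, T, Qs. split; auto.
  destruct H1.
  - apply ltsA_tau. eapply red_struct; eauto using sc_refl.
  - eapply ltsA_rcv; eauto using sc_trans.
  - eapply ltsA_snd; eauto using sc_trans.
Qed.

Lemma ltsAI_label P C P' : ltsAI P C P' ->
  C = CHole \/ (exists a, C = COut a) \/ (exists a T, C = CIn a T /\ pure T).
Proof.
  intros [Ce [Qe [T [Qs [H1 [H2 [H3 [H4 H5]]]]]]]].
  destruct H1; simpl in H5; injection H5; intros; subst; eauto 7.
Qed.

Section PureSource.

Variable P : proc.
Hypothesis pure_P : pure P.

Lemma ltsAI_hole_red P' : ltsAI P CHole P' -> red P P'.
Proof.
  intros [Ce [Qe [T [Qs [H1 [H2 [H3 [H4 H5]]]]]]]].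
  destruct H1 as [P Q Hr| |]; simpl in H5; try discriminate.
  rewrite (proj1 (subst_pure T 1)) in H3 by (eapply red_pure; eauto).
  injection H3 as <-. eapply red_struct; eauto using sc_refl.
Qed.

Lemma red_ltsAI_hole P' : red P P' -> ltsAI P CHole P'.
Proof.
  intros H. exists CHole, P', PZero, P'. repeat split.
  - apply ltsA_tau; auto.
  - apply (proj1 (subst_pure PZero 1)). eapply red_pure; eauto.
  - apply sc_refl.
Qed.

Lemma ltsAI_out_lts_in a P' : ltsAI P (COut a) P' -> lts P (AIn a) P'.
Proof.
  intros [Ce [Qe [T [Qs [H1 [H2 [H3 [H4 H5]]]]]]]].
  destruct H1 as [|P A b Q M R HP Hb|]; simpl in H5; try discriminate.
  injection H5 as ->.
  pose proof (proj1 (proj1 pure_scong _ _ HP) pure_P) as Hp.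
  rewrite pure_nus in Hp. simpl in Hp.
  assert (Hq : pure (nus A (PPar Q R))) by (rewrite pure_nus; simpl; tauto).
  rewrite (proj1 (subst_pure T 1) _ Hq) in H3. injection H3 as <-.
  eapply lts_struct; [apply HP | apply lts_nus; [apply lts_par, lts_in|] | exact H4].
  simpl. intros x Hx [->|[]]; auto.
Qed.

Lemma ltsAI_in_lts_out a T P' : ltsAI P (CIn a T) P' ->
  pure T /\ exists P1, lts P (AOut a) P1 /\ scong P' (PPar P1 T).
Proof.
  intros [Ce [Qe [T0 [Qs [H1 [H2 [H3 [H4 H5]]]]]]]].
  destruct H1 as [| |P A b Q HP Hb]; simpl in H5; try discriminate.
  injection H5 as -> ->.
  pose proof (proj1 (proj1 pure_scong _ _ HP) pure_P) as Hp.
  rewrite pure_nus in Hp. simpl in Hp.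
  destruct (subst_nus_par_var A Q T Qs (proj2 Hp) H3) as [-> HA].
  split; auto. exists (nus A Q). split.
  - eapply lts_struct; [apply HP | apply lts_nus; [apply lts_par, lts_out|] |].
    + simpl. intros x Hx [->|[]]; auto.
    + eapply sc_trans; [apply scong_nus, sc_par_comm | apply scong_nus, sc_par_unit].
  - eapply sc_trans; [apply sc_sym, H4 | apply sc_sym, nus_par_scope; auto].
Qed.

Lemma lts_out_ltsAI_in a T P1 : pure T -> lts P (AOut a) P1 -> ltsAI P (CIn a T) (PPar P1 T).
Proof.
  intros HT H. assert (pure P1) by (eapply lts_pure; eauto).
  exists (CIn a (PVar 1)), (nus [] (PPar P1 (PVar 1))), T, (PPar P1 T). repeat split; auto.
  - apply ltsA_snd; [| simpl; auto]. simpl.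
    eapply sc_trans; [apply lts_out_scong; eauto | apply sc_par_comm].
  - simpl. rewrite (proj1 (subst_pure T 1)); auto.
  - apply sc_refl.
Qed.

End PureSource.

(** * Inputs as [A]-transitions *)

(* [P] offers an input on [a] through a redex under restrictions [A] that
   avoid the names in [S]; [P1] is what is left after the input. *)
Definition rcv_redex (a : name) (S : list name) (P P1 : proc) : Prop :=
  exists A Q M R, ~ In a A /\ (forall x, In x A -> ~ In x S) /\
    scong P (nus A (PPar (PSum (SPlus (SIn a Q) M)) R)) /\ scong P1 (nus A (PPar Q R)).

Lemma rcv_redex_scong a S P P' P1 P1' :
  scong P P' -> scong P1 P1' -> rcv_redex a S P' P1' -> rcv_redex a S P P1.
Proof.
  intros HP HP1 [A [Q [M [R [HA [HS [H1 H2]]]]]]].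
  exists A, Q, M, R; repeat split; eauto using sc_trans.
Qed.

(* Alpha-convert the new binder to a name [c] outside [S], so that it can
   join the restrictions of the redex. *)
Lemma rcv_redex_nu a b P P1 S :
  a <> b -> (forall S', rcv_redex a S' P P1) -> rcv_redex a S (PNu b P) (PNu b P1).
Proof.
  intros Hab Hredex.
  set (c := fresh (a :: b :: S ++ fn P ++ fn P1)).
  pose proof (fresh_notin (a :: b :: S ++ fn P ++ fn P1)) as Hc. fold c in Hc. clearbody c.
  simpl in Hc. rewrite !in_app_iff in Hc.
  destruct (Hredex (b :: c :: S)) as [A [Q [M [R [HA [HS [H1 H2]]]]]]].
  assert (HAbc : forall x, In x A -> x <> b /\ x <> c)
    by (intros x Hx; specialize (HS x Hx); simpl in HS; split; intros ->; tauto).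
  assert (Hfresh : forall X Y, scong X Y -> ~ In c (fn X) -> ~ In c (fn (PNu b Y)))
    by (intros X Y HXY Hn; simpl; rewrite in_filter_neq;
        intros [Hin _]; apply Hn, (proj1 fn_scong _ _ HXY); auto).
  exists (c :: A), (swap b c Q), (swapM b c M), (swap b c R). repeat split.
  - simpl. intros [->|E]; tauto.
  - simpl. intros x [<-|E]; [tauto|]. intro; apply (HS x E); simpl; auto.
  - eapply sc_trans; [apply sc_nu, H1|].
    eapply sc_trans; [apply sc_alpha with (b := c); apply (Hfresh P); tauto|].
    simpl. rewrite swap_nus by auto. simpl.
    rewrite (swapn_id b c a) by (intros ->; tauto). apply sc_refl.
  - eapply sc_trans; [apply sc_nu, H2|].
    eapply sc_trans; [apply sc_alpha with (b := c); apply (Hfresh P1); tauto|].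
    simpl. rewrite swap_nus by auto. apply sc_refl.
Qed.

Lemma rcv_redex_par a P P1 R S :
  (forall S', rcv_redex a S' P P1) -> rcv_redex a S (PPar P R) (PPar P1 R).
Proof.
  intros Hredex.
  destruct (Hredex (S ++ fn R)) as [A [Q [M [R0 [HA [HS [H1 H2]]]]]]].
  assert (HR : forall x, In x A -> ~ In x (fn R))
    by (intros x Hx Hin; apply (HS x Hx), in_app_iff; auto).
  exists A, Q, M, (PPar R0 R). repeat split; auto.
  - intros x Hx Hin; apply (HS x Hx), in_app_iff; auto.
  - eapply sc_trans; [apply sc_par_l, H1|].
    eapply sc_trans; [apply nus_par_scope; auto | apply scong_nus, sc_par_assoc].
  - eapply sc_trans; [apply sc_par_l, H2|].
    eapply sc_trans; [apply nus_par_scope; auto | apply scong_nus, sc_par_assoc].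
Qed.

Lemma st_in_rcv_redex P a P1 S : st P (AIn a) P1 -> rcv_redex a S P P1.
Proof.
  remember (AIn a) as mu eqn:E. intros H. revert S.
  induction H; subst; try discriminate; intros S.
  - destruct (stM_prefix _ _ _ H) as [pre [M' [H1 [[-> E']|[b [-> E']]]]]];
      try discriminate.
    injection E' as ->.
    exists [], P, M', PZero. simpl. repeat split; auto.
    + eapply sc_trans; [apply sc_sum, H1 | apply sc_sym, sc_par_unit].
    + apply sc_sym, sc_par_unit.
  - apply rcv_redex_nu; auto. simpl in H0. tauto.
  - apply rcv_redex_par; auto.
  - eapply rcv_redex_scong; [apply sc_par_comm | apply sc_par_comm |].
    apply rcv_redex_par; auto.
Qed.

Lemma lts_in_ltsAI_out P a P1 : pure P -> lts P (AIn a) P1 ->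
  exists P2, ltsAI P (COut a) P2 /\ scong P2 P1.
Proof.
  intros HP H. destruct (lts_st _ _ _ H) as [X [H1 H2]].
  destruct (st_in_rcv_redex _ _ _ [] H1) as [A [Q [M [R [HA [_ [H3 H4]]]]]]].
  pose proof (proj1 (proj1 pure_scong _ _ H3) HP) as Hp.
  rewrite pure_nus in Hp. simpl in Hp.
  exists (nus A (PPar Q R)). split.
  - exists (COut a), (nus A (PPar Q R)), PZero, (nus A (PPar Q R)). repeat split; auto.
    + eapply ltsA_rcv; eauto.
    + apply (proj1 (subst_pure PZero 1)). rewrite pure_nus; simpl; tauto.
    + apply sc_refl.
  - eapply sc_trans; [apply sc_sym, H4 | auto].
Qed.

(** * Asynchronous bisimilarity *)

Definition async_answer (R : proc -> proc -> Prop) (Q : proc) (mu : act) (P' : proc) :=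
  (exists Q', lts Q mu Q' /\ R P' Q') \/
  (exists a, mu = AIn a /\ exists Q', lts Q ATau Q' /\ R P' (PPar Q' (POut a))).

Lemma async_answer_mono (R R' : proc -> proc -> Prop) Q Q0 mu P' P0' :
  scong Q0 Q -> (forall Q', R P' Q' -> R' P0' Q') -> async_answer R Q mu P' ->
  async_answer R' Q0 mu P0'.
Proof.
  intros HQ HR [[Q' [HT HPQ]]|[a [-> [Q' [HT HPQ]]]]].
  - left. exists Q'; split; auto. eapply lts_struct; eauto using sc_refl.
  - right. exists a; split; auto. exists Q'; split; auto.
    eapply lts_struct; eauto using sc_refl.
Qed.

Lemma async_bisim_answer R : async_bisim R ->
  forall P Q mu P', R P Q -> lts P mu P' -> async_answer R Q mu P'.
Proof.
  intros [_ HR] P Q mu P' HPQ HT. destruct (HR P Q HPQ) as [Htau [Hout Hin]].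
  destruct mu as [|a|a].
  - left. apply Htau; auto.
  - destruct (Hin a P' HT) as [?|?]; [left; auto | right; eauto].
  - left. apply Hout; auto.
Qed.

Lemma async_bisim_of_answer R : symmetric_rel R ->
  (forall P Q mu P', R P Q -> lts P mu P' -> async_answer R Q mu P') -> async_bisim R.
Proof.
  intros Hsym HR. split; auto. intros P Q HPQ. repeat split.
  - intros P' HT. destruct (HR _ _ _ _ HPQ HT) as [?|[a [E _]]]; auto; discriminate.
  - intros a P' HT. destruct (HR _ _ _ _ HPQ HT) as [?|[b [E _]]]; auto; discriminate.
  - intros a P' HT. destruct (HR _ _ _ _ HPQ HT) as [?|[b [E ?]]]; auto.
    injection E as <-. auto.
Qed.

Lemma async_bisimilar_sym : symmetric_rel async_bisimilar.
Proof. intros P Q [R [[Hsym HR] HPQ]]. exists R; split; [split|]; auto. Qed.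

Lemma async_bisimilar_answer P Q mu P' : async_bisimilar P Q -> lts P mu P' ->
  async_answer async_bisimilar Q mu P'.
Proof.
  intros [R [HR HPQ]] HT. eapply async_answer_mono; [apply sc_refl | | ].
  - intros Q' H. exists R; split; eauto.
  - eapply async_bisim_answer; eauto.
Qed.

Lemma async_bisimilar_scong X P Q Y :
  scong X P -> async_bisimilar P Q -> scong Q Y -> async_bisimilar X Y.
Proof.
  intros H1 H2 H3.
  exists (fun X Y => exists P Q, scong X P /\ async_bisimilar P Q /\ scong Q Y).
  split; [|eauto]. apply async_bisim_of_answer.
  - intros A B [P' [Q' [? [? ?]]]]. exists Q', P'.
    repeat split; [apply sc_sym | apply async_bisimilar_sym | apply sc_sym]; auto.
  - intros A B mu A' [P' [Q' [HA [HPQ HB]]]] HT.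
    assert (HT' : lts P' mu A')
      by (eapply lts_struct; [apply sc_sym, HA | exact HT | apply sc_refl]).
    eapply async_answer_mono;
      [apply sc_sym, HB | | apply (async_bisimilar_answer _ _ _ _ HPQ HT')].
    intros B' HAB. exists A', B'; repeat split; auto using sc_refl.
Qed.

Definition par_closure X Y :=
  exists P Q T, async_bisimilar P Q /\ scong X (PPar P T) /\ scong Y (PPar Q T).

Lemma par_closure_intro P Q T : async_bisimilar P Q -> par_closure (PPar P T) (PPar Q T).
Proof. intros H. exists P, Q, T; repeat split; auto using sc_refl. Qed.

Lemma par_closure_scong X X' Y Y' :
  scong X' X -> scong Y' Y -> par_closure X Y -> par_closure X' Y'.
Proof. intros HX HY [P [Q [T [H1 [H2 H3]]]]]. exists P, Q, T; eauto using sc_trans. Qed.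

Lemma par_closure_left_step P Q T mu P' :
  async_bisimilar P Q -> lts P mu P' -> async_answer par_closure (PPar Q T) mu (PPar P' T).
Proof.
  intros HPQ HT.
  destruct (async_bisimilar_answer _ _ _ _ HPQ HT) as [[Q' [HQ H]]|[a [-> [Q' [HQ H]]]]].
  - left. exists (PPar Q' T); split; [apply lts_par | apply par_closure_intro]; auto.
  - right. exists a; split; auto. exists (PPar Q' T); split; [apply lts_par; auto|].
    eapply par_closure_scong; [apply sc_refl | apply sc_par_right_comm |].
    apply par_closure_intro; auto.
Qed.

(* An input of [P] synchronising with an output [T == T' | a] of [T]: if [Q]
   answers by a tau step, the message stays in [T]. *)
Lemma par_closure_comm_in P Q T a P' T' :
  async_bisimilar P Q -> lts P (AIn a) P' -> lts T (AOut a) T' ->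
  async_answer par_closure (PPar Q T) ATau (PPar P' T').
Proof.
  intros HPQ HP HT. left.
  destruct (async_bisimilar_answer _ _ _ _ HPQ HP) as [[Q' [HQ H]]|[b [E [Q' [HQ H]]]]].
  - exists (PPar Q' T'); split; [eapply lts_comm | apply par_closure_intro]; eauto.
  - injection E as <-. exists (PPar Q' T); split; [apply lts_par; auto|].
    eapply par_closure_scong; [apply sc_refl | | apply (par_closure_intro _ _ T' H)].
    eapply sc_trans; [apply sc_par_r, lts_out_scong; eauto | apply sc_par_assoc_comm].
Qed.

Lemma par_closure_comm_out P Q T a P' T' :
  async_bisimilar P Q -> lts P (AOut a) P' -> lts T (AIn a) T' ->
  async_answer par_closure (PPar Q T) ATau (PPar P' T').
Proof.
  intros HPQ HP HT. left.
  destruct (async_bisimilar_answer _ _ _ _ HPQ HP)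
    as [[Q' [HQ H]]|[b [E _]]]; [|discriminate].
  exists (PPar Q' T'); split; [|apply par_closure_intro; auto].
  eapply lts_struct; [apply sc_par_comm | eapply lts_comm; eauto | apply sc_par_comm].
Qed.

Lemma par_closure_bisim : async_bisim par_closure.
Proof.
  apply async_bisim_of_answer.
  - intros X Y [P [Q [T [H1 [H2 H3]]]]]. exists Q, P, T.
    split; auto. apply async_bisimilar_sym; auto.
  - intros X Y mu X' [P [Q [T [HPQ [HX HY]]]]] HT.
    assert (HT' : lts (PPar P T) mu X')
      by (eapply lts_struct; [apply sc_sym, HX | exact HT | apply sc_refl]).
    destruct (lts_st _ _ _ HT') as [Z [HZ HZX]].
    eapply async_answer_mono; [exact HY | intros Y' HY'; eapply par_closure_scong;
                                 [apply sc_sym, HZX | apply sc_refl | exact HY'] |].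
    inversion HZ; subst; clear HZ;
      repeat match goal with H : st _ _ _ |- _ => apply st_lts in H end.
    + eapply par_closure_left_step; eauto.
    + left. exists (PPar Q Q'); split; [|apply par_closure_intro; auto].
      eapply lts_struct; [apply sc_par_comm | apply lts_par; eauto | apply sc_par_comm].
    + eapply par_closure_comm_in; eauto.
    + eapply par_closure_comm_out; eauto.
Qed.

Lemma async_bisimilar_par P Q T :
  async_bisimilar P Q -> async_bisimilar (PPar P T) (PPar Q T).
Proof.
  intros H. exists par_closure; split; [apply par_closure_bisim | apply par_closure_intro; auto].
Qed.

(** * [L]-bisimilarity *)

Lemma L_bisimilar_sym L : symmetric_rel (L_bisimilar L).
Proof. intros P Q [R [[Hsym HR] HPQ]]. exists R; split; [split|]; auto. Qed.

Lemma L_bisimilar_bisim L : L_bisim L (L_bisimilar L).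
Proof.
  split; [apply L_bisimilar_sym|].
  intros P Q C P' [R [[Hsym HR] H]] HT. destruct (HR _ _ _ _ H HT) as [H1 H2]. split.
  - intros HL. destruct (H1 HL) as [Q' [? ?]]. exists Q'; split; auto.
    exists R; split; [split|]; auto.
  - intros HL. destruct (H2 HL) as [Q' [? ?]]. exists Q'; split; auto.
    exists R; split; [split|]; auto.
Qed.

Lemma apply_ctx_scong C X Y : scong X Y -> scong (apply_ctx C X) (apply_ctx C Y).
Proof. destruct C; simpl; intros; auto using sc_par_l. Qed.

Lemma L_bisimilar_scong L X P Q Y :
  scong X P -> L_bisimilar L P Q -> scong Q Y -> L_bisimilar L X Y.
Proof.
  intros H1 H2 H3.
  exists (fun X Y => exists P Q, scong X P /\ L_bisimilar L P Q /\ scong Q Y).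
  split; [|eauto]. split.
  - intros A B [P' [Q' [? [? ?]]]]. exists Q', P'.
    repeat split; [apply sc_sym | apply L_bisimilar_sym | apply sc_sym]; auto.
  - intros A B C A' [P' [Q' [HA [HPQ HB]]]] HT.
    apply ltsAI_scong with (P := P') in HT; [|apply sc_sym; auto].
    destruct (proj2 (L_bisimilar_bisim L) _ _ _ _ HPQ HT) as [C1 C2]. split.
    + intros HL. destruct (C1 HL) as [B' [? ?]]. exists B'; split.
      * eapply ltsAI_scong; [apply sc_sym, HB | eauto].
      * exists A', B'; repeat split; auto using sc_refl.
    + intros HL. destruct (C2 HL) as [B' [? ?]]. exists B'; split.
      * eapply red_struct; [apply apply_ctx_scong, sc_sym, HB | eauto | apply sc_refl].
      * exists A', B'; repeat split; auto using sc_refl.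
Qed.

Lemma LA_hole : LA CHole.
Proof. left; auto. Qed.

Lemma LA_in a T : pure T -> LA (CIn a T).
Proof. right; eauto. Qed.

Lemma not_LA_out a : ~ LA (COut a).
Proof. intros [E|[b [T [_ E]]]]; discriminate. Qed.

Definition pure_async_bisimilar X Y := pure X /\ pure Y /\ async_bisimilar X Y.

Lemma pure_async_bisimilar_L_bisim : L_bisim LA pure_async_bisimilar.
Proof.
  split.
  - intros X Y [? [? ?]]. repeat split; auto. apply async_bisimilar_sym; auto.
  - intros X Y C X' [HX [HY HXY]] HT.
    destruct (ltsAI_label _ _ _ HT) as [->|[[a ->]|[a [T [-> HTp]]]]].
    + pose proof (ltsAI_hole_red _ HX _ HT) as Hr.
      destruct (async_bisimilar_answer _ _ _ _ HXY (red_lts_tau _ _ Hr))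
        as [[Y' [HY' H']]|[a [E _]]]; [|discriminate].
      split; [|intro NL; exfalso; apply NL, LA_hole].
      intros _. exists Y'. split; [apply red_ltsAI_hole, lts_tau_red; auto|].
      repeat split; eauto using lts_pure, red_pure.
    + pose proof (ltsAI_out_lts_in _ HX _ _ HT) as Hl.
      split; [intros HL; exfalso; apply (not_LA_out a HL)|]. intros _.
      destruct (async_bisimilar_answer _ _ _ _ HXY Hl)
        as [[Y' [? ?]]|[b [E [Y' [? ?]]]]]; [|injection E as <-].
      * exists Y'. split; [apply lts_in_red; auto|].
        repeat split; eauto using lts_pure.
      * exists (PPar Y' (POut a)). split; [apply red_par, lts_tau_red; auto|].
        repeat split; simpl; eauto using lts_pure.
    + destruct (ltsAI_in_lts_out _ HX _ _ _ HT) as [_ [X1 [Hl Hs]]].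
      destruct (async_bisimilar_answer _ _ _ _ HXY Hl)
        as [[Y1 [HY1 HA1]]|[b [E _]]]; [|discriminate].
      split; [|intro NL; exfalso; apply NL, LA_in; auto]. intros _.
      exists (PPar Y1 T). split; [apply lts_out_ltsAI_in; auto|]. split; [|split].
      * apply (proj1 pure_scong _ _ (sc_sym _ _ Hs)). simpl; eauto using lts_pure.
      * simpl; eauto using lts_pure.
      * eapply async_bisimilar_scong; [exact Hs | apply async_bisimilar_par, HA1 | apply sc_refl].
Qed.

Definition pure_L_bisimilar X Y := pure X /\ pure Y /\ L_bisimilar LA X Y.

Lemma pure_L_bisimilar_async_bisim : async_bisim pure_L_bisimilar.
Proof.
  apply async_bisim_of_answer.
  - intros X Y [? [? ?]]. repeat split; auto. apply L_bisimilar_sym; auto.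
  - intros X Y mu X' [HX [HY HXY]] HT.
    pose proof (proj2 (L_bisimilar_bisim LA) X Y) as HB.
    assert (HX' : pure X') by (eapply lts_pure; eauto).
    destruct mu as [|a|a].
    + left. destruct (HB CHole X' HXY (red_ltsAI_hole _ HX _ (lts_tau_red _ _ HT))) as [C1 _].
      destruct (C1 LA_hole) as [Y' [HY' HL']].
      exists Y'. split; [apply red_lts_tau, (ltsAI_hole_red _ HY); auto|].
      repeat split; auto. eapply red_pure; eauto using ltsAI_hole_red.
    + destruct (lts_in_ltsAI_out _ _ _ HX HT) as [X2 [HT2 Hs2]].
      destruct (HB _ _ HXY HT2) as [_ C2].
      destruct (C2 (not_LA_out a)) as [Y' [Hr HL']]. simpl in Hr.
      destruct (red_par_out_inv _ _ _ Hr) as [[Y1 [HY1 HYs]]|[Y1 [HY1 HYs]]].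
      * right. exists a; split; auto. exists Y1. split; auto.
        repeat split; simpl; eauto using lts_pure.
        eapply L_bisimilar_scong; [apply sc_sym, Hs2 | apply HL' | auto].
      * left. exists Y1. split; auto. repeat split; eauto using lts_pure.
        eapply L_bisimilar_scong; [apply sc_sym, Hs2 | apply HL' | auto].
    + left. assert (HP0 : pure PZero) by exact I.
      destruct (HB (CIn a PZero) _ HXY (lts_out_ltsAI_in _ HX _ _ _ HP0 HT)) as [C1 _].
      destruct (C1 (LA_in a PZero HP0)) as [Y' [HY' HL']].
      destruct (ltsAI_in_lts_out _ HY _ _ _ HY') as [_ [Y1 [Hl Hs]]].
      exists Y1. split; auto. repeat split; eauto using lts_pure.
      eapply L_bisimilar_scong; [apply sc_sym, sc_par_unit | apply HL' |].
      eapply sc_trans; [apply Hs | apply sc_par_unit].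
Qed.

Theorem mainTheorem7 :
  forall P Q : proc, pure P -> pure Q ->
    (L_bisimilar LA P Q <-> async_bisimilar P Q).
Proof.
  intros P Q HP HQ. split; intros H.
  - exists pure_L_bisimilar. split; [apply pure_L_bisimilar_async_bisim | split; auto].
  - exists pure_async_bisimilar. split; [apply pure_async_bisimilar_L_bisim | split; auto].
Qed.
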